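(* For $1\le n\le\infty$, the category of (left) $\mathcal C_n$-modules in the symmetric monoidal category of vertical bicomplexes is isomorphic to the category $\mathrm{Ch}_n$ of $n$-multicomplexes: a module $(M,d_0^M,\lambda)$ corresponds to the $n$-multicomplex $(M,d_0^M,d_1^M,d_2^M,\dots)$ with $d_i^M(m)=\lambda(d_i\otimes m)$ for $i\ge1$, and module morphisms correspond to morphisms of $n$-multicomplexes.
   Context: $R$ is a commutative unital ring. For $1\le n\le\infty$, an $n$-multicomplex is a $\mathbb Z\times\mathbb Z$-bigraded $R$-module $A$ with $R$-linear maps $d_i$ ($i\ge0$) of bidegree $(-i,1-i)$ such that $\sum_{i+j=l}(-1)^id_id_j=0$ for all $l\ge0$ and $d_i=0$ for $i\ge n$; morphisms are bidegree $(0,0)$ maps commuting with all $d_i$; the category is $\mathrm{Ch}_n$. A vertical bicomplex is a $1$-multicomplex (only $d_0$, with $d_0^2=0$); vertical bicomplexes form a symmetric monoidal category under $(A\otimes B,d_0\otimes1+1\otimes d_0)$ with Koszul signs for the pairing $\langle(x_1,x_2),(y_1,y_2)\rangle=x_1y_1+x_2y_2$. A monoid there (''dg algebra'') is a bigraded unital associative algebra with a square-zero derivation of bidegree $(0,1)$; a module over it is a vertical bicomplex $M$ with an action $\lambda$ compatible with differentials. $\mathcal C_\infty=R\langle d_1,d_2,\dots\rangle$ is the free bigraded associative unital $R$-algebra on generators $d_i$ ($i\ge1$) of bidegree $(-i,1-i)$. For $k\ge1$ let $S_k=\sum_{i+j=k,\ i,j\ge1}(-1)^{i+1}d_id_j$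 (so $S_1=0$). $\delta_0$ is the unique derivation of bidegree $(0,1)$ with $\delta_0(d_i)=S_i$, satisfying $\delta_0(xy)=\delta_0(x)y+(-1)^{x_2}x\delta_0(y)$ for $x$ of bidegree $(x_1,x_2)$. For $n\ge1$, $I_n$ is the two-sided ideal generated by $S_k$ and $d_k$ for all $k\ge n$, $I_\infty=0$, and $\mathcal C_n=(\mathcal C_\infty/I_n,\delta_0)$. *)

From HB Require Import structures.
From mathcomp Require Import all_boot all_order all_algebra.
Set Implicit Arguments. Unset Strict Implicit. Unset Printing Implicit Defensive.
Import Order.TTheory GRing.Theory Num.Theory.
Local Open Scope ring_scope.

Inductive extnat := Fin of nat | Inf.

Definition ext_le (n : extnat) (k : nat) : Prop :=
  match n with Fin m => (m <= k)%N | Inf => False end.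

Definition ext_ge1 (n : extnat) : Prop :=
  match n with Fin m => (1 <= m)%N | Inf => True end.

Record bigraded (R : comPzRingType) := Bigraded {
  bg_mod :> lmodType R;
  bg_hom : int -> int -> bg_mod -> Prop;   (* bg_hom p q x : x lies in M_{p,q} *)
  bg_hom0 : forall p q, bg_hom p q 0;
  bg_homD : forall p q x y, bg_hom p q x -> bg_hom p q y -> bg_hom p q (x + y);
  bg_homZ : forall p q (r : R) x, bg_hom p q x -> bg_hom p q (r *: x);
  bg_span : forall x : bg_mod, exists (s : seq (int * int)) (c : int * int -> bg_mod),
     [/\ uniq s, (forall k, bg_hom k.1 k.2 (c k)) & x = \sum_(k <- s) c k];
  bg_indep : forall (s : seq (int * int)) (c : int * int -> bg_mod),
     uniq s -> (forall k, bg_hom k.1 k.2 (c k)) -> \sum_(k <- s) c k = 0 ->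
     forall k, k \in s -> c k = 0 }.

Definition lin (R : comPzRingType) (M N : lmodType R) (f : M -> N) : Prop :=
  forall (r : R) x y, f (r *: x + y) = r *: f x + f y.

Definition bideg (R : comPzRingType) (M N : bigraded R) (a b : int) (f : M -> N) : Prop :=
  forall p q x, bg_hom p q x -> bg_hom (p + a) (q + b) (f x).

Definition ksign (R : comPzRingType) (q : int) : R := (-1) ^+ (absz q).

Definition vbicomplex (R : comPzRingType) (M : bigraded R) (d0 : M -> M) : Prop :=
  [/\ lin d0, bideg 0 1 d0 & forall x, d0 (d0 x) = 0].

Definition multicomplex (R : comPzRingType) (n : extnat) (M : bigraded R)
    (d : nat -> M -> M) : Prop :=
  [/\ forall i, lin (d i),
      forall i : nat, bideg (- (i%:Z)) (1 - i%:Z) (d i),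
      forall (l : nat) (x : M), \sum_(i < l.+1) ((-1) ^+ i : R) *: d i (d (l - i)%N x) = 0
    & forall i, ext_le n i -> forall x, d i x = 0].

Definition multicomplex_morphism (R : comPzRingType) (M N : bigraded R)
    (d : nat -> M -> M) (e : nat -> N -> N) (f : M -> N) : Prop :=
  [/\ lin f, bideg 0 0 f & forall i x, f (d i x) = e i (f x)].

(* ---------- the free algebra C_infty = R<d_1, d_2, ...> ----------
   An element is a finitely supported function  words -> R,  a word
   [:: i1; ...; ik] (all ij >= 1) standing for the monomial d_i1 ... d_ik. *)
Definition word := seq nat.
Definition raw (R : comPzRingType) := word -> R.

Definition finsupp (R : comPzRingType) (a : raw R) : Prop :=
  exists s : seq word, forall w, a w != 0 -> (w \in s) && all (fun i => 0 < i)%N w.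

Definition zerof (R : comPzRingType) : raw R := fun _ => 0.
Definition addf (R : comPzRingType) (a b : raw R) : raw R := fun w => a w + b w.
Definition subf (R : comPzRingType) (a b : raw R) : raw R := fun w => a w - b w.
Definition scalef (R : comPzRingType) (r : R) (a : raw R) : raw R := fun w => r * a w.
Definition wordf (R : comPzRingType) (u : word) : raw R := fun w => (w == u)%:R.
Definition onef (R : comPzRingType) : raw R := wordf R [::].
Definition gen (R : comPzRingType) (i : nat) : raw R := wordf R [:: i].
Definition mulf (R : comPzRingType) (a b : raw R) : raw R :=
  fun w => \sum_(i < (size w).+1) a (take i w) * b (drop i w).

Definition Sk (R : comPzRingType) (k : nat) : raw R :=
  fun w => \sum_(1 <= i < k) (-1) ^+ (i + 1) * (w == [:: i; (k - i)%N])%:R.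

(* bidegree of a monomial: d_i has bidegree (-i, 1-i) *)
Definition wdeg (w : word) : int * int :=
  (- ((sumn w)%:Z), (size w)%:Z - (sumn w)%:Z).

Definition homog (R : comPzRingType) (a : raw R) (p q : int) : Prop :=
  forall w, a w != 0 -> wdeg w = (p, q).

(* delta_0 on monomials, by the Leibniz rule
   delta_0(d_i x) = S_i x + (-1)^{(1-i)} d_i delta_0(x) *)
Fixpoint delta_word (R : comPzRingType) (w : word) : raw R :=
  match w with
  | [::] => zerof R
  | i :: w' => addf (mulf (Sk R i) (wordf R w'))
                    (scalef ((-1) ^+ (i + 1)) (mulf (gen R i) (delta_word R w')))
  end.

Definition Delta (R : comPzRingType) (a b : raw R) : Prop :=
  exists s : seq word, [/\ uniq s, forall w, a w != 0 -> w \in s &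
     b = fun v => \sum_(w <- s) a w * delta_word R w v].

Inductive In_ideal (R : comPzRingType) (n : extnat) : raw R -> Prop :=
| I_zero : In_ideal n (zerof R)
| I_d k : ext_le n k -> In_ideal n (gen R k)
| I_S k : ext_le n k -> In_ideal n (Sk R k)
| I_add a b : In_ideal n a -> In_ideal n b -> In_ideal n (addf a b)
| I_scale r a : In_ideal n a -> In_ideal n (scalef r a)
| I_mull u a : finsupp u -> In_ideal n a -> In_ideal n (mulf u a)
| I_mulr a u : finsupp u -> In_ideal n a -> In_ideal n (mulf a u).

Definition coset (R : comPzRingType) (n : extnat) (a : raw R) : raw R -> Prop :=
  fun b => In_ideal n (subf b a).

Definition Cn (R : comPzRingType) (n : extnat) : Type :=
  {P : raw R -> Prop | exists a, finsupp a /\ P = coset n a}.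

Definition rep (R : comPzRingType) (n : extnat) (a : raw R) (x : Cn R n) : Prop :=
  proj1_sig x a.

(* ---------- (left) C_n-modules in vertical bicomplexes ----------
   lam x m = lambda(x (x) m).  The operations of C_n (sum, scalar,
   product, unit, differential) are expressed through representatives. *)
Definition is_Cn_module (R : comPzRingType) (n : extnat) (M : bigraded R)
    (d0 : M -> M) (lam : Cn R n -> M -> M) : Prop :=
      (forall x, lin (lam x)) /\
      (forall x y z a b, rep a x -> rep b y -> rep (addf a b) z ->
          forall m, lam z m = lam x m + lam y m) /\
      (forall (r : R) x z a, rep a x -> rep (scalef r a) z ->
          forall m, lam z m = r *: lam x m) /\
      (forall x, rep (onef R) x -> forall m, lam x m = m) /\
      (forall x y z a b, rep a x -> rep b y -> rep (mulf a b) z ->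
          forall m, lam z m = lam x (lam y m)) /\
      (forall x a p q, rep a x -> homog a p q ->
          forall p' q' m, bg_hom p' q' m -> bg_hom (p + p') (q + q') (lam x m)) /\
      (* lambda commutes with differentials, Koszul sign (-1)^{a_2} *)
      (forall x y a b p q, rep a x -> homog a p q -> Delta a b -> rep b y ->
          forall m, d0 (lam x m) = lam y m + ksign R q *: lam x (d0 m)).

Definition module_morphism (R : comPzRingType) (n : extnat) (M N : bigraded R)
    (d0 : M -> M) (e0 : N -> N) (lam : Cn R n -> M -> M) (mu : Cn R n -> N -> N)
    (f : M -> N) : Prop :=
  [/\ lin f, bideg 0 0 f, (forall m, f (d0 m) = e0 (f m))
    & forall x m, f (lam x m) = mu x (f m)].

Definition assoc_family (R : comPzRingType) (n : extnat) (M : bigraded R)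
    (d0 : M -> M) (lam : Cn R n -> M -> M) (d : nat -> M -> M) : Prop :=
  d 0%N = d0 /\
  forall i x, (0 < i)%N -> rep (gen R i) x -> forall m, d i m = lam x m.

(* A word [i1; ...; ik] acts on a bigraded module with maps d_i by the composite
   d_i1 o ... o d_ik, and linear extension evaluates C_infinity multiplicatively.
   For an n-multicomplex the defining relation in degree k says exactly that S_k acts
   as the graded commutator [d_0, d_k], and d_k = 0 for k >= n; so evaluation kills
   I_n and descends to C_n, and the Leibniz recursion defining delta_0 turns into
   the compatibility of the action with the differentials.  Conversely, in a
   C_n-module the generator d_k acts with bidegree (-k, 1-k), the compatibility
   applied to delta_0(d_k) = S_k gives back the multicomplex relations, and since
   monomials span C_infinity every module structure is the evaluation determined
   by the d_k; this yields uniqueness and the correspondence of morphisms. *)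

From HB Require Import structures.
From mathcomp Require Import all_boot all_order all_algebra.
From mathcomp Require Import zify.
From Stdlib Require Import FunctionalExtensionality PropExtensionality ProofIrrelevance.
From Stdlib Require Import IndefiniteDescription.
Set Implicit Arguments. Unset Strict Implicit. Unset Printing Implicit Defensive.
Import GRing.Theory.
Local Open Scope ring_scope.

Section RingFacts.
Variable R : comPzRingType.

Lemma sumr_neq0_exists (I : eqType) (r : seq I) (F : I -> R) :
  \sum_(j <- r) F j != 0 -> exists2 j, j \in r & F j != 0.
Proof.
elim: r => [|j r IH]; first by rewrite big_nil eqxx.
rewrite big_cons; have [->|Fj _] := eqVneq (F j) 0; last by exists j; rewrite ?mem_head.
by rewrite add0r => /IH [k kr Fk]; exists k; rewrite // in_cons kr orbT.
Qed.

Lemma mulr_neq0_args (x y : R) : x * y != 0 -> x != 0 /\ y != 0.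
Proof.
have [->|_] := eqVneq x 0; first by rewrite mul0r eqxx.
by have [->|] := eqVneq y 0; rewrite ?mulr0 ?eqxx.
Qed.

Lemma natr_bool_neq0 (b : bool) : (b%:R : R) != 0 -> b.
Proof. by case: b; rewrite ?eqxx. Qed.

End RingFacts.

Section LinearMaps.
Variables (R : comPzRingType) (M N : lmodType R).

Lemma linD (f : M -> N) : lin f -> forall x y, f (x + y) = f x + f y.
Proof. by move=> hf x y; have := hf 1 x y; rewrite !scale1r. Qed.

Lemma lin0 (f : M -> N) : lin f -> f 0 = 0.
Proof. by move=> hf; apply: (addrI (f 0)); rewrite -linD // !addr0. Qed.

Lemma linZ (f : M -> N) : lin f -> forall r x, f (r *: x) = r *: f x.
Proof. by move=> hf r x; have := hf r x 0; rewrite lin0 // !addr0. Qed.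

Lemma lin_sum (f : M -> N) (I : Type) (r : seq I) (F : I -> M) :
  lin f -> f (\sum_(i <- r) F i) = \sum_(i <- r) f (F i).
Proof.
move=> hf; elim: r => [|i r IH]; first by rewrite !big_nil lin0.
by rewrite !big_cons linD // IH.
Qed.

Lemma lin_comp (P : lmodType R) (f : N -> P) (g : M -> N) :
  lin f -> lin g -> lin (fun x => f (g x)).
Proof. by move=> hf hg r x y; rewrite hg hf. Qed.

End LinearMaps.

Section RawAlgebra.
Variable R : comPzRingType.
Implicit Types (a b : raw R) (s t : seq word) (u v w : word).

Definition supp_in a s := forall w, a w != 0 -> w \in s.

Definition pos_word w := all (fun i => 0 < i)%N w.

Definition Sk_words (k : nat) : seq word := [seq [:: i; (k - i)%N] | i <- index_iota 1 k].

Lemma supp_in_sub a s t : supp_in a s -> {subset s <= t} -> supp_in a t.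
Proof. by move=> ha st w /ha /st. Qed.

Lemma supp_in_catl a s t : supp_in a s -> supp_in a (s ++ t).
Proof. by move=> ha; apply: supp_in_sub ha _ => w ws; rewrite mem_cat ws. Qed.

Lemma supp_in_catr a s t : supp_in a t -> supp_in a (s ++ t).
Proof. by move=> ha; apply: supp_in_sub ha _ => w wt; rewrite mem_cat wt orbT. Qed.

Lemma supp_in_add a b s t : supp_in a s -> supp_in b t -> supp_in (addf a b) (s ++ t).
Proof.
move=> ha hb w; rewrite /addf mem_cat; have [->|/ha -> //] := eqVneq (a w) 0.
by rewrite add0r => /hb ->; rewrite orbT.
Qed.

Lemma supp_in_scale r a s : supp_in a s -> supp_in (scalef r a) s.
Proof. by move=> ha w /mulr_neq0_args [_ /ha]. Qed.

Lemma supp_in_word u : supp_in (wordf R u) [:: u].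
Proof. by move=> w /natr_bool_neq0 /eqP ->; rewrite mem_head. Qed.

Lemma supp_in_Sk k : supp_in (Sk R k) (Sk_words k).
Proof.
move=> w /sumr_neq0_exists [i ik /mulr_neq0_args [_ /natr_bool_neq0 /eqP ->]].
exact: map_f.
Qed.

Lemma coef_expand a s w : supp_in a s -> a w = \sum_(u <- undup s) a u * (w == u)%:R.
Proof.
move=> ha; have [ws|wNs] := boolP (w \in s).
  rewrite (bigD1_seq w) ?mem_undup ?undup_uniq //= eqxx mulr1 big1 ?addr0 // => u.
  by rewrite eq_sym => /negPf ->; rewrite mulr0.
rewrite big1_seq => [|u /andP [_]]; first by apply/eqP; apply: contraR wNs => /ha.
by rewrite mem_undup => us; case: eqP => [wu|_]; [rewrite wu us in wNs | rewrite mulr0].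
Qed.

Lemma sum_take_drop_eq w u v :
  \sum_(i < (size w).+1) ((take i w == u)%:R * (drop i w == v)%:R : R) = (w == u ++ v)%:R.
Proof.
have [->|wNuv] := eqVneq w (u ++ v); last first.
  rewrite big1 // => i _; case: eqP => [wu|]; last by rewrite mul0r.
  case: eqP => [wv|]; last by rewrite mulr0.
  by move: wNuv; rewrite -(cat_take_drop i w) wu wv eqxx.
have lt_u : (size u < (size (u ++ v)).+1)%N by rewrite size_cat ltnS leq_addr.
rewrite (bigD1 (Ordinal lt_u)) //= take_size_cat // drop_size_cat // !eqxx mulr1.
rewrite big1 ?addr0 // => i /eqP ne_iu; case: eqP => [tu|]; last by rewrite mul0r.
case: ne_iu; apply: val_inj => /=; move/(congr1 size): tu; rewrite size_take.
by case: ltnP => // le_wi <-; apply/eqP; rewrite eqn_leq le_wi -ltnS ltn_ord.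
Qed.

Lemma mulfE a b sa sb w : supp_in a sa -> supp_in b sb ->
  mulf a b w = \sum_(u <- undup sa) \sum_(v <- undup sb) a u * b v * (w == u ++ v)%:R.
Proof.
move=> ha hb; rewrite /mulf.
under eq_bigr => i _ do rewrite (coef_expand (take i w) ha) (coef_expand (drop i w) hb) mulr_suml.
rewrite exchange_big /=; apply: eq_bigr => u _.
under eq_bigr => i _ do rewrite mulr_sumr.
rewrite exchange_big /=; apply: eq_bigr => v _.
by rewrite -sum_take_drop_eq mulr_sumr; apply: eq_bigr => i _; rewrite mulrACA.
Qed.

Lemma supp_in_mul a b sa sb : supp_in a sa -> supp_in b sb ->
  supp_in (mulf a b) [seq u ++ v | u <- sa, v <- sb].
Proof.
move=> ha hb w; rewrite (mulfE w ha hb) => /sumr_neq0_exists [u us] /sumr_neq0_exists [v vs].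
by case/mulr_neq0_args => _ /natr_bool_neq0 /eqP ->; apply: allpairs_f; rewrite -mem_undup.
Qed.

Lemma mulf_word u v : mulf (wordf R u) (wordf R v) = wordf R (u ++ v).
Proof. by apply: functional_extensionality => w; rewrite /mulf /wordf sum_take_drop_eq. Qed.

Lemma mulf1 a : mulf a (onef R) = a.
Proof.
apply: functional_extensionality => w.
rewrite /mulf /onef /wordf (bigD1 ord_max) //= take_size drop_size eqxx mulr1 big1 ?addr0 //.
move=> i /eqP ne_i; case: eqP => [/(congr1 size)|]; last by rewrite mulr0.
rewrite size_drop => /eqP; rewrite subn_eq0 => le_wi; case: ne_i; apply: val_inj.
by apply/eqP; rewrite /= eqn_leq le_wi -ltnS ltn_ord.
Qed.

Lemma mulf0 a : mulf a (zerof R) = zerof R.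
Proof. by apply: functional_extensionality => w; rewrite /mulf big1 // => i _; rewrite mulr0. Qed.

Lemma Delta_gen k : Delta (gen R k) (Sk R k).
Proof.
exists [:: [:: k]]; split => //; first exact: supp_in_word.
apply: functional_extensionality => v; rewrite big_seq1 /gen /wordf eqxx mul1r /=.
by rewrite -/(onef R) mulf1 mulf0 /addf /scalef mulr0 addr0.
Qed.

Lemma homog_gen i : homog (gen R i) (- i%:Z) (1 - i%:Z).
Proof. by move=> w /natr_bool_neq0 /eqP ->; rewrite /wdeg /= addn0. Qed.

Lemma finsuppP a :
  finsupp a <-> exists s, supp_in a s /\ (forall w, a w != 0 -> pos_word w).
Proof.
split=> [[s hs]|[s [hs hp]]]; first by exists s; split=> w /hs /andP [].
by exists s => w aw; apply/andP; split; [exact: hs | exact: hp].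
Qed.

Lemma finsupp_supp_in a : finsupp a -> exists s, supp_in a s.
Proof. by case/finsuppP => s [hs _]; exists s. Qed.

Lemma finsupp_zero : finsupp (zerof R).
Proof. by exists [::] => w; rewrite eqxx. Qed.

Lemma finsupp_add a b : finsupp a -> finsupp b -> finsupp (addf a b).
Proof.
case/finsuppP => s [hs ps] /finsuppP [t [ht pt]]; apply/finsuppP.
exists (s ++ t); split; first exact: supp_in_add.
by move=> w; rewrite /addf; have [->|/ps //] := eqVneq (a w) 0; rewrite add0r => /pt.
Qed.

Lemma finsupp_scale r a : finsupp a -> finsupp (scalef r a).
Proof.
case/finsuppP => s [hs ps]; apply/finsuppP; exists s.
by split=> [|w /mulr_neq0_args [_ /ps]]; first exact: supp_in_scale.
Qed.

Lemma finsupp_mul a b : finsupp a -> finsupp b -> finsupp (mulf a b).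
Proof.
case/finsuppP => s [hs ps] /finsuppP [t [ht pt]]; apply/finsuppP.
exists [seq u ++ v | u <- s, v <- t]; split; first exact: supp_in_mul.
move=> w; rewrite (mulfE w hs ht) => /sumr_neq0_exists [u us] /sumr_neq0_exists [v vs].
case/mulr_neq0_args => /mulr_neq0_args [/ps pu /pt pv] /natr_bool_neq0 /eqP ->.
by rewrite /pos_word all_cat; apply/andP.
Qed.

Lemma finsupp_word u : pos_word u -> finsupp (wordf R u).
Proof.
move=> pu; apply/finsuppP; exists [:: u].
by split=> [|w /natr_bool_neq0 /eqP ->]; first exact: supp_in_word.
Qed.

Lemma finsupp_gen i : (0 < i)%N -> finsupp (gen R i).
Proof. by move=> i_gt0; apply: finsupp_word; rewrite /pos_word /= i_gt0. Qed.

Lemma finsupp_Sk k : finsupp (Sk R k).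
Proof.
apply/finsuppP; exists (Sk_words k); split; first exact: supp_in_Sk.
move=> w /sumr_neq0_exists [i]; rewrite mem_index_iota => /andP [i_gt0 lt_ik].
by case/mulr_neq0_args => _ /natr_bool_neq0 /eqP ->; rewrite /pos_word /= i_gt0 subn_gt0 lt_ik.
Qed.

Definition monomial_sum a t : raw R :=
  foldr (fun u acc => addf (scalef (a u) (wordf R u)) acc) (zerof R) t.

Lemma monomial_sum_expand a s :
  supp_in a s -> a = monomial_sum a [seq u <- undup s | a u != 0].
Proof.
move=> ha; apply: functional_extensionality => w.
have -> : monomial_sum a [seq u <- undup s | a u != 0] w =
          \sum_(u <- [seq u <- undup s | a u != 0]) a u * (w == u)%:R.
  by elim: [seq _ <- _ | _] => [|u t IH]; rewrite ?big_nil // big_cons /= /addf IH.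
rewrite big_filter (coef_expand w ha) [LHS](bigID (fun u => a u != 0)) /=.
by rewrite [X in _ + X]big1 ?addr0 // => u; rewrite negbK => /eqP ->; rewrite mul0r.
Qed.

End RawAlgebra.

Lemma ext_le_gt0 (n : extnat) (k : nat) : ext_ge1 n -> ext_le n k -> (0 < k)%N.
Proof. by case: n => //= m; apply: leq_trans. Qed.

Section Quotient.
Variables (R : comPzRingType) (n : extnat).
Implicit Types (a b c : raw R) (x y : Cn R n).

Lemma ideal_finsupp a : ext_ge1 n -> In_ideal n a -> finsupp a.
Proof.
move=> hn; elim=> {a} [|k /(ext_le_gt0 hn)|k _| | | |].
- exact: finsupp_zero.
- exact: finsupp_gen.
- exact: finsupp_Sk.
- by move=> a b _ ha _ hb; apply: finsupp_add.
- by move=> r a _ ha; apply: finsupp_scale.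
- by move=> u a hu _ ha; apply: finsupp_mul.
- by move=> a u hu _ ha; apply: finsupp_mul.
Qed.

Lemma ideal_subf_refl a : In_ideal n (subf a a).
Proof.
suff -> : subf a a = zerof R by apply: I_zero.
by apply: functional_extensionality => w; rewrite /subf subrr.
Qed.

Lemma ideal_subf_sym a b : In_ideal n (subf a b) -> In_ideal n (subf b a).
Proof.
suff -> : subf b a = scalef (-1) (subf a b) by apply: I_scale.
by apply: functional_extensionality => w; rewrite /subf /scalef mulN1r opprB.
Qed.

Lemma ideal_subf_trans a b c :
  In_ideal n (subf a b) -> In_ideal n (subf b c) -> In_ideal n (subf a c).
Proof.
suff -> : subf a c = addf (subf a b) (subf b c) by apply: I_add.
by apply: functional_extensionality => w; rewrite /subf /addf addrA subrK.
Qed.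

Definition Cn_of a (ha : finsupp a) : Cn R n :=
  exist _ (coset n a) (ex_intro _ a (conj ha erefl)).

Lemma rep_Cn_of a (ha : finsupp a) : rep a (Cn_of ha).
Proof. exact: ideal_subf_refl. Qed.

Lemma exists_rep x : exists a, finsupp a /\ rep a x.
Proof.
case: x => P [a [ha E]]; exists a; split => //.
by rewrite /rep /= E; apply: ideal_subf_refl.
Qed.

Lemma val_Cn_rep a x : rep a x -> sval x = coset n a.
Proof.
case: x => P [b [hb E]] hab; rewrite /rep /= in hab *; subst P.
apply: functional_extensionality => c; apply: propositional_extensionality; split => hc.
  exact: ideal_subf_trans hc (ideal_subf_sym hab).
exact: ideal_subf_trans hc hab.
Qed.

Lemma rep_inj a x y : rep a x -> rep a y -> x = y.
Proof.
move=> hx hy; apply: eq_sig_hprop => [P|]; first exact: proof_irrelevance.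
by rewrite (val_Cn_rep hx) (val_Cn_rep hy).
Qed.

Lemma rep_sub_ideal a b x : rep a x -> rep b x -> In_ideal n (subf b a).
Proof. by move=> ha; rewrite /rep (val_Cn_rep ha). Qed.

Lemma rep_finsupp a x : ext_ge1 n -> rep a x -> finsupp a.
Proof.
move=> hn; case: x => P [b [hb E]] hab; rewrite /rep /= in hab; subst P.
suff -> : a = addf (subf a b) b by apply: finsupp_add => //; apply: ideal_finsupp.
by apply: functional_extensionality => w; rewrite /addf /subf subrK.
Qed.

Lemma rep_supp_in a x : ext_ge1 n -> rep a x -> exists s, supp_in a s.
Proof. by move=> hn /(rep_finsupp hn) /finsupp_supp_in. Qed.

Lemma exists_rep_data x :
  exists p : raw R * seq word, [/\ finsupp p.1, supp_in p.1 p.2 & rep p.1 x].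
Proof.
have [a [ha xa]] := exists_rep x; have [s hs] := finsupp_supp_in ha.
by exists (a, s).
Qed.

Definition rep_data x : raw R * seq word :=
  sval (constructive_indefinite_description _ (exists_rep_data x)).

Lemma rep_dataP x :
  [/\ finsupp (rep_data x).1, supp_in (rep_data x).1 (rep_data x).2 & rep (rep_data x).1 x].
Proof. by rewrite /rep_data; case: constructive_indefinite_description. Qed.

End Quotient.

Section Evaluation.
Variables (R : comPzRingType) (M : bigraded R) (d : nat -> M -> M).
Implicit Types (a b : raw R) (s t : seq word) (u w : word) (m : M).

Definition word_act w m : M := foldr d m w.

(* [s] is any list containing the support of [a]; see eval_supp_in. *)
Definition eval s a m : M := \sum_(w <- undup s) a w *: word_act w m.

Definition Sk_act k m : M := \sum_(1 <= i < k) ((-1) ^+ (i + 1) : R) *: d i (d (k - i)%N m).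

Lemma eval_ext a b s m : (forall w, a w = b w) -> eval s a m = eval s b m.
Proof. by move=> eq_ab; apply: eq_bigr => w _; rewrite eq_ab. Qed.

Lemma eval_zero s m : eval s (zerof R) m = 0.
Proof. by rewrite /eval big1 // => w _; rewrite scale0r. Qed.

Lemma eval_add a b s m : eval s (addf a b) m = eval s a m + eval s b m.
Proof. by rewrite /eval -big_split; apply: eq_bigr => w _; rewrite scalerDl. Qed.

Lemma eval_scale r a s m : eval s (scalef r a) m = r *: eval s a m.
Proof. by rewrite /eval scaler_sumr; apply: eq_bigr => w _; rewrite scalerA. Qed.

Lemma eval_sum (I : Type) (r : seq I) (F : I -> raw R) s m :
  eval s (fun w => \sum_(j <- r) F j w) m = \sum_(j <- r) eval s (F j) m.
Proof.
by rewrite /eval (exchange_big_dep xpredT) //=; apply: eq_bigr => w _; rewrite scaler_suml.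
Qed.

Lemma eval_monomial s u (c : R) m :
  u \in s -> eval s (fun w => c * (w == u)%:R) m = c *: word_act u m.
Proof.
move=> us; rewrite /eval (bigD1_seq u) ?mem_undup ?undup_uniq //= eqxx mulr1.
by rewrite big1 ?addr0 // => w /negPf ->; rewrite mulr0 scale0r.
Qed.

Lemma eval_word s u m : u \in s -> eval s (wordf R u) m = word_act u m.
Proof.
move=> us; rewrite (@eval_ext _ (fun w => 1 * (w == u)%:R)) => [|w]; last by rewrite mul1r.
by rewrite eval_monomial // scale1r.
Qed.

Lemma eval_supp_in a s t m : supp_in a s -> supp_in a t -> eval s a m = eval t a m.
Proof.
suff evalE t' : supp_in a t' ->
    eval t' a m = \sum_(w <- [seq w <- undup t' | a w != 0]) a w *: word_act w m.
  move=> hs ht; rewrite (evalE s hs) (evalE t ht); apply/perm_big/uniq_perm.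
  - by rewrite filter_uniq // undup_uniq.
  - by rewrite filter_uniq // undup_uniq.
  move=> w; rewrite !mem_filter !mem_undup.
  by case: (boolP (a w != 0)) => //= /[dup] /hs -> /ht ->.
move=> _; rewrite big_filter /eval (bigID (fun w => a w != 0)) /= [X in _ + X]big1 ?addr0 //.
by move=> w; rewrite negbK => /eqP ->; rewrite scale0r.
Qed.

Lemma eval_Sk k m : eval (Sk_words k) (Sk R k) m = Sk_act k m.
Proof.
rewrite /Sk eval_sum; apply: eq_big_seq => i ik.
by rewrite eval_monomial //; apply: map_f.
Qed.

Lemma relation_split k m :
  \sum_(i < k.+2) ((-1) ^+ i : R) *: d i (d (k.+1 - i)%N m) =
  d 0%N (d k.+1 m) - Sk_act k.+1 m + (-1) ^+ k.+1 *: d k.+1 (d 0%N m).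
Proof.
rewrite -(big_mkord xpredT (fun i => ((-1) ^+ i : R) *: d i (d (k.+1 - i)%N m))).
rewrite big_nat_recl // big_nat_recr //= subn0 subnn expr0 scale1r /Sk_act big_add1 -sumrN.
rewrite addrA; congr (_ + _ + _); apply: eq_bigr => i _.
by rewrite exprD expr1 mulrN1 scaleNr opprK.
Qed.

Lemma word_act_bideg :
  (forall i : nat, bideg (- (i%:Z)) (1 - i%:Z) (d i)) ->
  forall w (p q : int) m,
    bg_hom p q m -> bg_hom (p + (wdeg w).1) (q + (wdeg w).2) (word_act w m).
Proof.
move=> deg_d; elim=> [|i w IH] p q m hm; first by rewrite /wdeg /= oppr0 subr0 !addr0.
have -> : p + (wdeg (i :: w)).1 = p + (wdeg w).1 + - (i%:Z) by rewrite /wdeg /=; lia.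
have -> : q + (wdeg (i :: w)).2 = q + (wdeg w).2 + (1 - i%:Z) by rewrite /wdeg /=; lia.
exact/deg_d/IH.
Qed.

Section LinearFamily.
Hypothesis lin_d : forall i, lin (d i).

Lemma lin_word_act w : lin (word_act w).
Proof. by elim: w => [|i w IH] //=; apply: lin_comp. Qed.

Lemma lin_eval s a : lin (eval s a).
Proof.
move=> r x y; rewrite /eval scaler_sumr -big_split /=; apply: eq_bigr => w _.
by rewrite lin_word_act scalerDr !scalerA mulrC.
Qed.

Lemma eval_mul a b sa sb m : supp_in a sa -> supp_in b sb ->
  eval [seq u ++ v | u <- sa, v <- sb] (mulf a b) m = eval sa a (eval sb b m).
Proof.
move=> ha hb; rewrite (eval_ext _ _ (fun w => mulfE w ha hb)) eval_sum [RHS]/eval.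
apply: eq_big_seq => u us; rewrite eval_sum (lin_sum _ _ (lin_word_act u)) scaler_sumr.
apply: eq_big_seq => v vs; rewrite (@eval_monomial _ (u ++ v) (a u * b v)); last first.
  by move: us vs; rewrite !mem_undup; apply: allpairs_f.
by rewrite (linZ (lin_word_act u)) scalerA /word_act foldr_cat.
Qed.

End LinearFamily.
End Evaluation.

Lemma eval_morph (R : comPzRingType) (M N : bigraded R) (d : nat -> M -> M)
    (e : nat -> N -> N) (f : M -> N) (s : seq word) (a : raw R) (m : M) :
  lin f -> (forall i x, f (d i x) = e i (f x)) -> f (eval d s a m) = eval e s a (f m).
Proof.
move=> lin_f fde; rewrite /eval lin_sum //; apply: eq_bigr => w _.
by rewrite linZ //; congr (_ *: _); elim: w => //= i w <-.
Qed.

Fixpoint delta_words (w : word) : seq word :=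
  if w is i :: w' then
    [seq u ++ v | u <- Sk_words i, v <- [:: w']] ++
    [seq u ++ v | u <- [:: [:: i]], v <- delta_words w']
  else [::].

Lemma supp_in_delta_word (R : comPzRingType) (w : word) :
  supp_in (delta_word R w) (delta_words w).
Proof.
elim: w => [|i w IH]; first by move=> v; rewrite /= eqxx.
have hS := supp_in_mul (@supp_in_Sk R i) (@supp_in_word R w).
have hD := supp_in_mul (@supp_in_word R [:: i]) IH.
exact: supp_in_add hS (supp_in_scale hD).
Qed.

Definition word_sign (R : comPzRingType) (w : word) : R := (-1) ^+ (size w + sumn w).

Lemma ksign_wdeg (R : comPzRingType) (w : word) (p q : int) :
  wdeg w = (p, q) -> ksign R q = word_sign R w.
Proof.
rewrite /wdeg => [[_ <-]]; rewrite /ksign /word_sign -signr_odd -[RHS]signr_odd.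
congr (_ ^+ _); case: (leqP (sumn w) (size w)) => h.
  by rewrite distnEl // oddB // oddD.
by rewrite distnEr ?(ltnW h) // oddB ?(ltnW h) // oddD addbC.
Qed.

Section MulticomplexAction.
Variables (R : comPzRingType) (n : extnat) (M : bigraded R) (d : nat -> M -> M).
Hypotheses (hn : ext_ge1 n) (hd : multicomplex n d).

(* The multicomplex relation in degree k: S_k acts as the graded commutator [d_0, d_k]. *)
Lemma Sk_actE k m : Sk_act d k m = d 0%N (d k m) + (-1) ^+ k *: d k (d 0%N m).
Proof.
have [_ _ rel_d _] := hd; case: k => [|k].
  have dd0 : d 0%N (d 0%N m) = 0 by have := rel_d 0%N m; rewrite big_ord1 expr0 scale1r.
  by rewrite /Sk_act big_geq // dd0 scaler0 addr0.
by move/eqP: (rel_d k.+1 m); rewrite relation_split addrAC subr_eq0 => /eqP.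
Qed.

Lemma eval_delta_word w m :
  eval d (delta_words w) (delta_word R w) m =
  d 0%N (word_act d w m) - word_sign R w *: word_act d w (d 0%N m).
Proof.
have [lin_d _ _ _] := hd.
elim: w m => [|i w IH] m; first by rewrite eval_zero /word_sign expr0 scale1r subrr.
have sSk := @supp_in_Sk R i; have sw := @supp_in_word R w.
have si := @supp_in_word R [:: i]; have sdw := @supp_in_delta_word R w.
have hS := supp_in_mul sSk sw; have hD := supp_in_mul si sdw.
rewrite [delta_word _ _]/= eval_add eval_scale.
rewrite -(eval_supp_in d m hS (supp_in_catl _ hS)) -(eval_supp_in d m hD (supp_in_catr _ hD)).
rewrite !eval_mul // !eval_word ?mem_head // eval_Sk IH Sk_actE /=.
have -> : word_sign R (i :: w) = - (-1) ^+ i * word_sign R w.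
  by rewrite /word_sign /= addSn exprS addnCA exprD mulrA mulN1r.
set x := word_act d w m; set y := word_act d w (d 0%N m).
have -> : d i (d 0%N x - word_sign R w *: y) = d i (d 0%N x) - word_sign R w *: d i y.
  by rewrite -scaleNr addrC (lin_d i) addrC scaleNr.
rewrite exprD expr1 mulrN1 scaleNr scalerBr opprB addrA addrAC addrK.
by rewrite scalerA mulNr scaleNr opprK.
Qed.

Lemma eval_ideal a s m : In_ideal n a -> supp_in a s -> eval d s a m = 0.
Proof.
have [lin_d _ _ vanish_d] := hd.
have supp_ideal (b : raw R) : In_ideal n b -> exists t, supp_in b t.
  by move/(ideal_finsupp hn)/finsupp_supp_in.
move=> ia; elim: ia s m => {a}
  [|k hk|k hk|a b ia IHa ib IHb|r a ia IHa|u a hu ia IHa|a u hu ia IHa] s m hs.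
- exact: eval_zero.
- by rewrite (eval_supp_in d m hs (@supp_in_word R [:: k])) eval_word ?mem_head //= vanish_d.
- rewrite (eval_supp_in d m hs (@supp_in_Sk R k)) eval_Sk Sk_actE.
  by rewrite (vanish_d k hk m) (vanish_d k hk) lin0 // scaler0 addr0.
- have [[sa sa_a] [sb sb_b]] := (supp_ideal a ia, supp_ideal b ib).
  rewrite (eval_supp_in d m hs (supp_in_add sa_a sb_b)) eval_add.
  by rewrite IHa ?IHb ?addr0 //; [apply: supp_in_catr | apply: supp_in_catl].
- have [sa sa_a] := supp_ideal a ia.
  by rewrite (eval_supp_in d m hs (supp_in_scale sa_a)) eval_scale IHa ?scaler0.
- have [[su su_u] [sa sa_a]] := (finsupp_supp_in hu, supp_ideal a ia).
  rewrite (eval_supp_in d m hs (supp_in_mul su_u sa_a)) eval_mul // IHa //.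
  exact: lin0 (lin_eval lin_d _ _).
- have [[su su_u] [sa sa_a]] := (finsupp_supp_in hu, supp_ideal a ia).
  by rewrite (eval_supp_in d m hs (supp_in_mul sa_a su_u)) eval_mul // IHa.
Qed.

Definition eval_action (x : Cn R n) (m : M) : M := eval d (rep_data x).2 (rep_data x).1 m.

Lemma eval_actionE a x s m : rep a x -> supp_in a s -> eval_action x m = eval d s a m.
Proof.
move=> xa hs; have [_ hs0 xa0] := rep_dataP x; set a0 := (rep_data x).1 in hs0 xa0 *.
have ia := rep_sub_ideal xa0 xa; have [t ht] := finsupp_supp_in (ideal_finsupp hn ia).
have E : a = addf a0 (subf a a0).
  by apply: functional_extensionality => w; rewrite /addf /subf addrC subrK.
have hs' : supp_in a ((rep_data x).2 ++ t) by rewrite E; apply: supp_in_add.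
rewrite (eval_supp_in d m hs hs') E eval_add (eval_ideal _ ia (supp_in_catr _ ht)) addr0.
exact: eval_supp_in (supp_in_catl _ hs0).
Qed.

Lemma eval_action_bideg x a p q : rep a x -> homog a p q ->
  forall p' q' m, bg_hom p' q' m -> bg_hom (p + p') (q + q') (eval_action x m).
Proof.
have [_ deg_d _ _] := hd.
move=> xa hom p' q' m hm; have [s hs] := rep_supp_in hn xa.
rewrite (eval_actionE m xa hs) /eval; apply: big_ind => [|u v|w _].
- exact: bg_hom0.
- exact: bg_homD.
have [->|/hom hw] := eqVneq (a w) 0; first by rewrite scale0r; apply: bg_hom0.
by apply: bg_homZ; rewrite addrC [q + _]addrC; have := word_act_bideg deg_d w hm; rewrite hw.
Qed.

Lemma eval_action_d0 x y a b p q : rep a x -> homog a p q -> Delta a b -> rep b y ->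
  forall m, d 0%N (eval_action x m) = eval_action y m + ksign R q *: eval_action x (d 0%N m).
Proof.
have [lin_d _ _ _] := hd.
move=> xa hom [s [us hs ->]] yb m.
set S := flatten [seq delta_words w | w <- s].
have hS w : w \in s -> supp_in (delta_word R w) S.
  move=> ws; apply: supp_in_sub (@supp_in_delta_word R w) _ => v vw.
  by apply/flatten_mapP; exists w.
have hb : supp_in (fun v => \sum_(w <- s) a w * delta_word R w v) S.
  by move=> v /sumr_neq0_exists [w ws /mulr_neq0_args [_ /(hS w ws)]].
rewrite !(eval_actionE _ xa hs) (eval_actionE m yb hb) eval_sum /eval undup_id //.
rewrite lin_sum // scaler_sumr -big_split /=; apply: eq_big_seq => w ws.
rewrite (linZ (lin_d 0%N)) -/(eval d S (scalef (a w) (delta_word R w)) m) eval_scale.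
rewrite (eval_supp_in d m (hS w ws) (@supp_in_delta_word R w)) eval_delta_word.
have [->|/hom /(ksign_wdeg R) ->] := eqVneq (a w) 0; first by rewrite !scale0r scaler0 addr0.
by rewrite scalerBr !scalerA mulrC subrK.
Qed.

Lemma eval_action_module : is_Cn_module (d 0%N) eval_action.
Proof.
have [lin_d _ _ _] := hd.
split; first by move=> x; apply: lin_eval.
split.
  move=> x y z a b xa yb zab m.
  have [[sa ha] [sb hb]] := (rep_supp_in hn xa, rep_supp_in hn yb).
  rewrite (eval_actionE m zab (supp_in_add ha hb)) eval_add.
  by rewrite -(eval_actionE m xa (supp_in_catl _ ha)) -(eval_actionE m yb (supp_in_catr _ hb)).
split.
  move=> r x z a xa zra m; have [sa ha] := rep_supp_in hn xa.
  by rewrite (eval_actionE m zra (supp_in_scale ha)) eval_scale -(eval_actionE m xa ha).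
split.
  by move=> x x1 m; rewrite (eval_actionE m x1 (@supp_in_word R [::])) eval_word ?mem_head.
split.
  move=> x y z a b xa yb zab m.
  have [[sa ha] [sb hb]] := (rep_supp_in hn xa, rep_supp_in hn yb).
  rewrite (eval_actionE m zab (supp_in_mul ha hb)) eval_mul //.
  by rewrite -(eval_actionE m yb hb) -(eval_actionE _ xa ha).
split; [exact: eval_action_bideg | exact: eval_action_d0].
Qed.

End MulticomplexAction.

Section ModuleAction.
Variables (R : comPzRingType) (n : extnat) (M : bigraded R).
Variables (d0 : M -> M) (lam : Cn R n -> M -> M) (d : nat -> M -> M).
Hypotheses (hn : ext_ge1 n) (hv : vbicomplex d0).
Hypotheses (hmod : is_Cn_module d0 lam) (hfam : assoc_family d0 lam d).

Lemma family_gen i (i_gt0 : (0 < i)%N) : d i = lam (Cn_of n (finsupp_gen R i_gt0)).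
Proof. by apply: functional_extensionality => m; apply: (proj2 hfam) => //; apply: rep_Cn_of. Qed.

Lemma lin_family i : lin (d i).
Proof.
have [lin_d0 _ _] := hv; case: i => [|i]; first by rewrite (proj1 hfam).
by rewrite (family_gen (ltn0Sn i)); apply: (proj1 hmod).
Qed.

Definition acts_by_eval (a : raw R) :=
  forall x, rep a x -> forall s, supp_in a s -> forall m, lam x m = eval d s a m.

Lemma acts_by_eval_add a b : finsupp a -> finsupp b ->
  acts_by_eval a -> acts_by_eval b -> acts_by_eval (addf a b).
Proof.
move=> fa fb Ha Hb z zab s hs m; have [_ [add_lam _]] := hmod.
have [[sa ha] [sb hb]] := (finsupp_supp_in fa, finsupp_supp_in fb).
rewrite (add_lam _ _ _ _ _ (rep_Cn_of n fa) (rep_Cn_of n fb) zab).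
rewrite (Ha _ (rep_Cn_of n fa) _ (supp_in_catl sb ha)).
rewrite (Hb _ (rep_Cn_of n fb) _ (supp_in_catr sa hb)).
by rewrite -eval_add (eval_supp_in d m (supp_in_add ha hb) hs).
Qed.

Lemma acts_by_eval_scale r a : finsupp a -> acts_by_eval a -> acts_by_eval (scalef r a).
Proof.
move=> fa Ha z zra s hs m; have [_ [_ [scale_lam _]]] := hmod.
have [sa ha] := finsupp_supp_in fa.
rewrite (scale_lam _ _ _ _ (rep_Cn_of n fa) zra) (Ha _ (rep_Cn_of n fa) _ ha) -eval_scale.
exact: eval_supp_in (supp_in_scale ha) hs.
Qed.

Lemma acts_by_eval_mul a b : finsupp a -> finsupp b ->
  acts_by_eval a -> acts_by_eval b -> acts_by_eval (mulf a b).
Proof.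
move=> fa fb Ha Hb z zab s hs m; have [_ [_ [_ [_ [mul_lam _]]]]] := hmod.
have [[sa ha] [sb hb]] := (finsupp_supp_in fa, finsupp_supp_in fb).
rewrite (mul_lam _ _ _ _ _ (rep_Cn_of n fa) (rep_Cn_of n fb) zab).
rewrite (Hb _ (rep_Cn_of n fb) _ hb) (Ha _ (rep_Cn_of n fa) _ ha).
rewrite -(eval_mul lin_family _ ha hb).
exact: eval_supp_in (supp_in_mul ha hb) hs.
Qed.

Lemma acts_by_eval_word u : pos_word u -> acts_by_eval (wordf R u).
Proof.
elim: u => [|i u IH].
  move=> _ x x1 s hs m; have [_ [_ [_ [one_lam _]]]] := hmod.
  by rewrite one_lam // (eval_supp_in d m hs (@supp_in_word R [::])) eval_word ?mem_head.
case/andP => i_gt0 pu; rewrite -(mulf_word R [:: i] u) -/(gen R i).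
have Hi : acts_by_eval (gen R i).
  move=> x xi s hs m.
  rewrite (eval_supp_in d m hs (@supp_in_word R [:: i])) eval_word ?mem_head //=.
  by rewrite (proj2 hfam i x i_gt0 xi).
exact: acts_by_eval_mul (finsupp_gen R i_gt0) (finsupp_word R pu) Hi (IH pu).
Qed.

Lemma acts_by_eval_monomial_sum a t :
  all pos_word t -> finsupp (monomial_sum a t) /\ acts_by_eval (monomial_sum a t).
Proof.
elim: t => [|u t IH] /=.
  split; first exact: finsupp_zero.
  have -> : zerof R = scalef 0 (onef R).
    by apply: functional_extensionality => w; rewrite /scalef mul0r.
  exact: acts_by_eval_scale (finsupp_word R _) (acts_by_eval_word _).
case/andP => pu /IH [ft Ht]; have fu := finsupp_scale (a u) (finsupp_word R pu).
split; first exact: finsupp_add.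
have Hu := acts_by_eval_scale (r := a u) (finsupp_word R pu) (acts_by_eval_word pu).
exact: acts_by_eval_add fu ft Hu Ht.
Qed.

Lemma module_actE a x s m : finsupp a -> rep a x -> supp_in a s -> lam x m = eval d s a m.
Proof.
move=> fa; have /finsuppP [s0 [hs0 ps0]] := fa.
rewrite (monomial_sum_expand hs0) => xa hs.
apply: (proj2 (acts_by_eval_monomial_sum _ _)) => //.
by apply/allP => u; rewrite mem_filter => /andP [/ps0].
Qed.

Lemma family_bideg i : bideg (- i%:Z) (1 - i%:Z) (d i).
Proof.
case: i => [|i] p q m hm.
  by have [_ deg_d0 _] := hv; have := deg_d0 p q m hm; rewrite (proj1 hfam) !subr0.
have [_ [_ [_ [_ [_ [deg_lam _]]]]]] := hmod.
rewrite (family_gen (ltn0Sn i)) addrC [q + _]addrC.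
exact: deg_lam (rep_Cn_of _ _) (@homog_gen R i.+1) _ _ _ hm.
Qed.

Lemma family_relation l m : \sum_(i < l.+1) ((-1) ^+ i : R) *: d i (d (l - i)%N m) = 0.
Proof.
have [_ _ d0d0] := hv; have [_ [_ [_ [_ [_ [_ d0_lam]]]]]] := hmod.
case: l => [|k]; first by rewrite big_ord1 expr0 scale1r (proj1 hfam) d0d0.
have k_gt0 := ltn0Sn k; have Sk_k := rep_Cn_of n (finsupp_Sk R k.+1).
have := d0_lam _ _ _ _ _ _ (rep_Cn_of n (finsupp_gen R k_gt0)) (@homog_gen R k.+1)
  (Delta_gen R k.+1) Sk_k m.
rewrite -(family_gen k_gt0) (module_actE m (finsupp_Sk R k.+1) Sk_k (@supp_in_Sk R k.+1)).
rewrite eval_Sk.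
have -> : ksign R (1 - k.+1%:Z) = (-1) ^+ k by rewrite /ksign; congr (_ ^+ _); lia.
rewrite -(proj1 hfam) => d0dk.
rewrite relation_split d0dk (addrAC (Sk_act d k.+1 m)) subrr add0r.
by rewrite exprS mulN1r scaleNr subrr.
Qed.

Lemma family_vanish i : ext_le n i -> forall m, d i m = 0.
Proof.
move=> hi m; have i_gt0 := ext_le_gt0 hn hi; have [_ [_ [scale_lam _]]] := hmod.
(* [gen R i] lies in I_n, so the class of d_i is also represented by [0 * gen R i]. *)
have gen_0 : rep (scalef 0 (gen R i)) (Cn_of n (finsupp_gen R i_gt0)).
  rewrite /rep /= /coset.
  have -> : subf (scalef 0 (gen R i)) (gen R i) = scalef (-1) (gen R i).
    by apply: functional_extensionality => w; rewrite /subf /scalef !mul0r mulN1r add0r.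
  exact/I_scale/I_d.
rewrite (family_gen i_gt0).
by rewrite (scale_lam _ _ _ _ (rep_Cn_of n (finsupp_gen R i_gt0)) gen_0) scale0r.
Qed.

Lemma family_multicomplex : multicomplex n d.
Proof.
by split; [exact: lin_family | exact: family_bideg | exact: family_relation |
           exact: family_vanish].
Qed.

End ModuleAction.

Lemma multicomplex_vbicomplex (R : comPzRingType) (n : extnat) (M : bigraded R)
    (d : nat -> M -> M) :
  multicomplex n d -> vbicomplex (d 0%N).
Proof.
case=> lin_d deg_d rel_d _; split=> [|p q m hm|m]; [exact: lin_d | exact: deg_d 0%N p q m hm|].
by have := rel_d 0%N m; rewrite big_ord1 expr0 scale1r.
Qed.

Lemma multicomplex_of_module (R : comPzRingType) (n : extnat) (M : bigraded R)
    (d0 : M -> M) (lam : Cn R n -> M -> M) :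
  ext_ge1 n -> vbicomplex d0 -> is_Cn_module d0 lam ->
  exists d : nat -> M -> M, assoc_family d0 lam d /\ multicomplex n d.
Proof.
move=> hn hv hmod.
pose d i : M -> M := if i is i'.+1 then lam (Cn_of n (finsupp_gen R (ltn0Sn i'))) else d0.
have hfam : assoc_family d0 lam d.
  split=> // -[|i] x // _ xi m.
  by rewrite /d (rep_inj (rep_Cn_of n (finsupp_gen R (ltn0Sn i))) xi).
by exists d; split; last exact: family_multicomplex hn hv hmod hfam.
Qed.

Lemma module_of_multicomplex_unique (R : comPzRingType) (n : extnat) (M : bigraded R)
    (d : nat -> M -> M) :
  ext_ge1 n -> multicomplex n d ->
  exists! lam : Cn R n -> M -> M, is_Cn_module (d 0%N) lam /\ assoc_family (d 0%N) lam d.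
Proof.
move=> hn hd; exists (eval_action d); split.
  split; first exact: eval_action_module.
  split=> // i x i_gt0 xi m.
  by rewrite (eval_actionE hn hd m xi (@supp_in_word R [:: i])) eval_word ?mem_head.
move=> lam [hmod hfam].
apply: functional_extensionality => x; apply: functional_extensionality => m.
have [fa hs xa] := rep_dataP x.
by rewrite (module_actE (multicomplex_vbicomplex hd) hmod hfam m fa xa hs).
Qed.

Lemma module_morphismP (R : comPzRingType) (n : extnat) (M N : bigraded R)
    (d0 : M -> M) (e0 : N -> N) (lam : Cn R n -> M -> M) (mu : Cn R n -> N -> N)
    (d : nat -> M -> M) (e : nat -> N -> N) :
  ext_ge1 n -> vbicomplex d0 -> vbicomplex e0 ->
  is_Cn_module d0 lam -> is_Cn_module e0 mu ->
  assoc_family d0 lam d -> assoc_family e0 mu e ->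
  forall f : M -> N, module_morphism d0 e0 lam mu f <-> multicomplex_morphism d e f.
Proof.
move=> hn hv hw hlam hmu hd he f; split.
  case=> lin_f deg_f f_d0 f_lam; split=> // [[|i]] m; first by rewrite (proj1 hd) (proj1 he).
  have xi := rep_Cn_of n (finsupp_gen R (ltn0Sn i)).
  by rewrite (proj2 hd _ _ (ltn0Sn i) xi) f_lam (proj2 he _ _ (ltn0Sn i) xi).
case=> lin_f deg_f f_d; split=> //; first by move=> m; rewrite -(proj1 hd) -(proj1 he).
move=> x m; have [fa hs xa] := rep_dataP x.
rewrite (module_actE hv hlam hd m fa xa hs) (module_actE hw hmu he _ fa xa hs).
exact: eval_morph.
Qed.

Theorem mainTheorem12 (R : comPzRingType) (n : extnat) (hn : ext_ge1 n) :
  (forall (M : bigraded R) (d0 : M -> M) (lam : Cn R n -> M -> M),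
     vbicomplex d0 -> is_Cn_module d0 lam ->
     exists d : nat -> M -> M, assoc_family d0 lam d /\ multicomplex n d)
  /\
  (forall (M : bigraded R) (d : nat -> M -> M),
     multicomplex n d ->
     exists! lam : Cn R n -> M -> M,
       is_Cn_module (d 0%N) lam /\ assoc_family (d 0%N) lam d)
  /\
  (forall (M N : bigraded R) (d0 : M -> M) (e0 : N -> N)
          (lam : Cn R n -> M -> M) (mu : Cn R n -> N -> N)
          (d : nat -> M -> M) (e : nat -> N -> N),
     vbicomplex d0 -> vbicomplex e0 ->
     is_Cn_module d0 lam -> is_Cn_module e0 mu ->
     assoc_family d0 lam d -> assoc_family e0 mu e ->
     forall f : M -> N,
       module_morphism d0 e0 lam mu f <-> multicomplex_morphism d e f).
Proof.
split; first by move=> M d0 lam; apply: multicomplex_of_module.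
split; first by move=> M d; apply: module_of_multicomplex_unique.
by move=> M N d0 e0 lam mu d e; apply: module_morphismP.
Qed.
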